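(* Let $(X,d)$ be a geodesic metric space and $\epsilon\ge0$ such that for all $x,y\in X$, $s,t\ge0$ with $B(x,s)\cap B(y,t)\ne\emptyset$ there exist $\xi\in X$, $R\ge0$ with $d_H(B(x,s)\cap B(y,t),B(\xi,R))\le\epsilon$. Then for every $q\ge0$, all $x,y\in X$, every $q$-path $\mu$ from $x$ to $y$ and every geodesic $\gamma$ from $x$ to $y$, each point of $\mu$ lies within distance $2q+6\epsilon$ of some point of $\gamma$.
   Context: $B(x,r)=\{z\in X: d(x,z)\le r\}$ denotes the closed ball and $d_H$ the Hausdorff distance. For $q\ge0$, a $q$-path from $x$ to $y$ is a continuous path $\mu$ from $x$ to $y$ such that every point $z$ on $\mu$ satisfies $d(x,z)+d(z,y)\le d(x,y)+q$. *)

From Stdlib Require Export Reals.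
Open Scope R_scope.

Record is_metric {X : Type} (d : X -> X -> R) : Prop := {
  metric_nonneg : forall x y, 0 <= d x y;
  metric_eq0 : forall x y, d x y = 0 <-> x = y;
  metric_sym : forall x y, d x y = d y x;
  metric_tri : forall x y z, d x z <= d x y + d y z
}.

Definition cball {X : Type} (d : X -> X -> R) (x : X) (r : R) : X -> Prop :=
  fun z => d x z <= r.

(* d_H(A,B) <= eps, where d_H(A,B) = max(sup_{a in A} inf_{b in B} d(a,b),
   sup_{b in B} inf_{a in A} d(a,b)); written out: every point of each set
   has infimal distance <= eps to the other set. *)
Definition hausdorff_le {X : Type} (d : X -> X -> R) (A B : X -> Prop) (eps : R) : Prop :=
  (forall a, A a -> forall delta, 0 < delta -> exists b, B b /\ d a b <= eps + delta) /\
  (forall b, B b -> forall delta, 0 < delta -> exists a, A a /\ d a b <= eps + delta).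

Definition is_geodesic {X : Type} (d : X -> X -> R) (x y : X) (gamma : R -> X) : Prop :=
  gamma 0 = x /\ gamma (d x y) = y /\
  forall u v, 0 <= u <= d x y -> 0 <= v <= d x y -> d (gamma u) (gamma v) = Rabs (u - v).

Definition geodesic_space {X : Type} (d : X -> X -> R) : Prop :=
  forall x y, exists gamma, is_geodesic d x y gamma.

Definition continuous_path {X : Type} (d : X -> X -> R) (mu : R -> X) : Prop :=
  forall t, 0 <= t <= 1 -> forall e, 0 < e -> exists delta, 0 < delta /\
    forall s, 0 <= s <= 1 -> Rabs (s - t) < delta -> d (mu s) (mu t) < e.

Definition is_qpath {X : Type} (d : X -> X -> R) (q : R) (x y : X) (mu : R -> X) : Prop :=
  continuous_path d mu /\ mu 0 = x /\ mu 1 = y /\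
  forall t, 0 <= t <= 1 -> d x (mu t) + d (mu t) y <= d x y + q.

(* Let z be a point of the q-path and set a = d(x,z), b = d(y,z), so that
   a + b <= d(x,y) + q.  Approximate the lens B(x,a) ∩ B(y,b), which contains z,
   by a ball B(xi,R) up to eps.  Every point of B(xi,R) is eps-close to the
   lens, hence lies in B(x,a+eps) ∩ B(y,b+eps).  If x is in B(xi,R), then
   d(x,y) <= b + eps and z is within q + eps of gamma(0).  Otherwise the point p
   at distance R from xi on a geodesic towards x gives
   d(x,y) <= d(x,p) + d(p,y) <= (a + eps - R) + (b + eps), i.e. R <= q + 2 eps;
   the lens then has diameter at most 2R + 2 eps <= 2q + 6 eps and contains both
   z and a point of gamma. *)

From Stdlib Require Import Reals Lra.
Open Scope R_scope.

Section Lens.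

Context {X : Type} (d : X -> X -> R).
Hypothesis Hmetric : is_metric d.

Definition lens (x : X) (a : R) (y : X) (b : R) : X -> Prop :=
  fun z => cball d x a z /\ cball d y b z.

Lemma geodesic_dist_endpoints (x y : X) (gamma : R -> X) (u : R) :
  is_geodesic d x y gamma -> 0 <= u <= d x y ->
  d x (gamma u) = u /\ d y (gamma u) = d x y - u.
Proof.
  intros [G0 [GD Giso]] Hu.
  rewrite <- G0 at 1; rewrite <- GD at 1.
  rewrite !Giso by lra.
  split; [rewrite Rabs_left1 | rewrite Rabs_right]; lra.
Qed.

Lemma geodesic_meets_lens (x y : X) (gamma : R -> X) (a b : R) :
  is_geodesic d x y gamma -> 0 <= a -> 0 <= b -> d x y <= a + b ->
  exists u, 0 <= u <= d x y /\ lens x a y b (gamma u).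
Proof.
  intros Hg Ha Hb Hab.
  pose proof (metric_nonneg d Hmetric x y).
  set (u := Rmax 0 (d x y - b)).
  assert (Hu : 0 <= u /\ d x y - b <= u /\ u <= a /\ u <= d x y).
  { unfold u; repeat split; try apply Rmax_l; try apply Rmax_r;
      apply Rmax_lub; lra. }
  exists u; split; [lra |].
  destruct (geodesic_dist_endpoints x y gamma u Hg ltac:(lra)) as [Hxu Hyu].
  unfold lens, cball; lra.
Qed.

Lemma geodesic_exit_point (xi x : X) (r : R) :
  geodesic_space d -> 0 <= r <= d xi x ->
  exists p, d xi p = r /\ d p x = d xi x - r.
Proof.
  intros Hgeod Hr.
  destruct (Hgeod xi x) as [g Hg].
  destruct (geodesic_dist_endpoints xi x g r Hg Hr) as [Hxip Hxp].
  exists (g r); split; [exact Hxip |].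
  rewrite (metric_sym d Hmetric); exact Hxp.
Qed.

Context {x y xi : X} {a b r eps : R}.
Hypothesis Hclose : hausdorff_le d (lens x a y b) (cball d xi r) eps.

Lemma ball_in_thick_lens (c : X) :
  cball d xi r c -> d x c <= a + eps /\ d y c <= b + eps.
Proof.
  intros Hc.
  split; apply Rle_plus_epsilon; intros delta Hdelta;
    destruct (proj2 Hclose c Hc delta Hdelta) as [w [[Hxw Hyw] Hwc]];
    unfold cball in *.
  - pose proof (metric_tri d Hmetric x w c); lra.
  - pose proof (metric_tri d Hmetric y w c); lra.
Qed.

Lemma lens_diam_le (z1 z2 : X) :
  lens x a y b z1 -> lens x a y b z2 -> d z1 z2 <= 2 * r + 2 * eps.
Proof.
  intros Hz1 Hz2.
  apply Rle_plus_epsilon; intros delta Hdelta.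
  destruct (proj1 Hclose z1 Hz1 (delta / 2) ltac:(lra)) as [c1 [Hc1 Hzc1]].
  destruct (proj1 Hclose z2 Hz2 (delta / 2) ltac:(lra)) as [c2 [Hc2 Hzc2]].
  unfold cball in Hc1, Hc2.
  pose proof (metric_tri d Hmetric z1 c1 z2).
  pose proof (metric_tri d Hmetric c1 xi z2).
  pose proof (metric_tri d Hmetric xi c2 z2).
  pose proof (metric_sym d Hmetric c1 xi).
  pose proof (metric_sym d Hmetric c2 z2).
  lra.
Qed.

Lemma lens_center_near_x : cball d xi r x -> d x y <= b + eps.
Proof.
  intros Hx.
  rewrite (metric_sym d Hmetric).
  exact (proj2 (ball_in_thick_lens x Hx)).
Qed.

Lemma lens_radius_le :
  geodesic_space d -> 0 <= r -> r < d xi x -> r + d x y <= a + b + 2 * eps.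
Proof.
  intros Hgeod Hr Hout.
  destruct (geodesic_exit_point xi x r Hgeod ltac:(lra)) as [p [Hxip Hpx]].
  assert (Hxi : cball d xi r xi).
  { unfold cball; rewrite (proj2 (metric_eq0 d Hmetric xi xi) eq_refl); lra. }
  assert (Hp : cball d xi r p) by (unfold cball; lra).
  destruct (ball_in_thick_lens xi Hxi) as [Hxxi _].
  destruct (ball_in_thick_lens p Hp) as [_ Hyp].
  pose proof (metric_tri d Hmetric x p y).
  pose proof (metric_sym d Hmetric x p).
  pose proof (metric_sym d Hmetric y p).
  pose proof (metric_sym d Hmetric x xi).
  lra.
Qed.

End Lens.

Theorem lemma3p4 (X : Type) (d : X -> X -> R) (eps : R)
  (Hmetric : is_metric d) (Hgeod : geodesic_space d) (Heps : 0 <= eps)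
  (Hball : forall (x y : X) (s t : R), 0 <= s -> 0 <= t ->
     (exists z, cball d x s z /\ cball d y t z) ->
     exists (xi : X) (Rr : R), 0 <= Rr /\
       hausdorff_le d (fun z => cball d x s z /\ cball d y t z) (cball d xi Rr) eps) :
  forall (q : R), 0 <= q -> forall (x y : X) (mu gamma : R -> X),
    is_qpath d q x y mu -> is_geodesic d x y gamma ->
    forall t, 0 <= t <= 1 ->
      exists u, 0 <= u <= d x y /\ d (mu t) (gamma u) <= 2 * q + 6 * eps.
Proof.
  intros q Hq x y mu gamma [_ [_ [_ Hqpath]]] Hgamma t Ht.
  set (z := mu t).
  pose proof (Hqpath t Ht) as Hab; fold z in Hab.
  pose proof (metric_tri d Hmetric x z y) as Htri.
  rewrite (metric_sym d Hmetric z y) in Hab, Htri.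
  pose proof (metric_nonneg d Hmetric x z); pose proof (metric_nonneg d Hmetric y z).
  pose proof (metric_nonneg d Hmetric x y).
  set (a := d x z) in *; set (b := d y z) in *.
  assert (Hz : lens d x a y b z) by (split; apply Rle_refl).
  destruct (Hball x y a b ltac:(lra) ltac:(lra) (ex_intro _ z Hz))
    as [xi [r [Hr Hclose]]].
  destruct (Rle_dec (d xi x) r) as [Hx | Hx].
  - exists 0; split; [lra |].
    destruct Hgamma as [G0 _]; rewrite G0, (metric_sym d Hmetric).
    pose proof (lens_center_near_x d Hmetric Hclose Hx).
    fold a; lra.
  - pose proof (lens_radius_le d Hmetric Hclose Hgeod Hr ltac:(lra)).
    destruct (geodesic_meets_lens d Hmetric x y gamma a b Hgamma
                ltac:(lra) ltac:(lra) ltac:(lra)) as [u [Hu Hgu]].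
    exists u; split; [exact Hu |].
    pose proof (lens_diam_le d Hmetric Hclose z (gamma u) Hz Hgu).
    lra.
Qed.
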